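(* Let $X$ be an $n$-skeletal simplicial set. Then $\text{St}(X)$ (i.e. its underlying simplicial set) is $(n+1)$-coskeletal.
   Context: A simplicial $T$-complex is a simplicial set with marked (''thin'') simplices such that degenerate simplices are thin, every horn $\Lambda^n_k\to X$ has a unique filler with thin top simplex, and if all nondegenerate faces of a horn are thin then its composition (the $k$-th face of that filler) is thin; morphisms are thin-preserving simplicial maps. $\text{St}:\text{sSet}\to\text{sTCom}$ is the left adjoint of the forgetful functor $\text{U}_{\text{St}}$ from simplicial $T$-complexes to simplicial sets. *)

(** Face/degeneracy maps are indexed by [nat]; only in-range indices
    (d_i on X_(n+1) with i <= n+1, s_i on X_n with i <= n) are meaningful,
    and the simplicial identities are required exactly for those. *)
Record sSet := {
  sob :> nat -> Type;
  face : forall n, nat -> sob (S n) -> sob n;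
  degen : forall n, nat -> sob n -> sob (S n);
  dd : forall n i j (x : sob (S (S n))), i < j -> j <= S (S n) ->
         face n i (face (S n) j x) = face n (pred j) (face (S n) i x);
  ds_lt : forall n i j (x : sob (S n)), i < j -> j <= S n ->
         face (S n) i (degen (S n) j x) = degen n (pred j) (face n i x);
  ds_eq : forall n j (x : sob n), j <= n -> face n j (degen n j x) = x;
  ds_eq1 : forall n j (x : sob n), j <= n -> face n (S j) (degen n j x) = x;
  ds_gt : forall n i j (x : sob (S n)), S j < i -> i <= S (S n) ->
         face (S n) i (degen (S n) j x) = degen n j (face n (pred i) x);
  ss : forall n i j (x : sob n), i <= j -> j <= n ->
         degen (S n) i (degen n j x) = degen (S n) (S j) (degen n i x)
}.

Arguments face {X} n i x : rename.
Arguments degen {X} n i x : rename.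

Definition is_smap (X Y : sSet) (f : forall n, X n -> Y n) : Prop :=
  (forall n i (x : X (S n)), i <= S n -> f n (face n i x) = face n i (f (S n) x)) /\
  (forall n i (x : X n), i <= n -> f (S n) (degen n i x) = degen n i (f n x)).

Definition degenerate (X : sSet) n (x : X (S n)) : Prop :=
  exists i (y : X n), i <= n /\ x = degen n i y.

Definition skeletal (n : nat) (X : sSet) : Prop :=
  forall m (x : X (S m)), n < S m -> degenerate X m x.

(** A family [h : nat -> X m] indexed by [0..m+1] of m-simplices, restricted to
    indices satisfying [P], is compatible, i.e. is a map from the union of the
    corresponding faces of the boundary of Delta^(m+1) into X:
    d_i h_j = d_(j-1) h_i for i < j. *)
Definition compat (X : sSet) (P : nat -> Prop) (m : nat) : (nat -> X m) -> Prop :=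
  match m return (nat -> X m) -> Prop with
  | 0 => fun _ => True
  | S p => fun h => forall i j, i < j -> j <= S (S p) -> P i -> P j ->
             face p i (h j) = face p (pred j) (h i)
  end.

Definition fills (X : sSet) (P : nat -> Prop) m (h : nat -> X m) (x : X (S m)) : Prop :=
  forall i, i <= S m -> P i -> face m i x = h i.

(** Horn Lambda^(m+1)_k: all faces except the k-th.
    Boundary of Delta^(m+1): all faces. *)
Definition horn_idx (k : nat) : nat -> Prop := fun i => i <> k.
Definition all_idx : nat -> Prop := fun _ => True.

Definition coskeletal (m : nat) (Y : sSet) : Prop :=
  forall k (h : nat -> Y k), m < S k -> compat Y all_idx k h ->
    exists! x : Y (S k), fills Y all_idx k h x.

Record TCom := {
  tss :> sSet;
  thin : forall n, tss (S n) -> Prop;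
  thin_degen : forall n (x : tss (S n)), degenerate tss n x -> thin n x;
  thin_horn : forall m k (h : nat -> tss m), k <= S m ->
      compat tss (horn_idx k) m h ->
      exists! x : tss (S m), thin m x /\ fills tss (horn_idx k) m h x;
  thin_comp : forall m k (h : nat -> tss (S m)) (x : tss (S (S m))),
      k <= S (S m) ->
      compat tss (horn_idx k) (S m) h ->
      thin (S m) x -> fills tss (horn_idx k) (S m) h x ->
      (forall i, i <= S (S m) -> i <> k -> ~ degenerate tss m (h i) -> thin m (h i)) ->
      thin m (face (S m) k x)
}.

Definition is_tmap (X Y : TCom) (g : forall n, X n -> Y n) : Prop :=
  is_smap X Y g /\ (forall n (x : X (S n)), thin X n x -> thin Y n (g (S n) x)).

(** [S] together with the unit [eta : X -> U_St S] is the free T-complex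
    St(X) on X, i.e. it is the value of the left adjoint of U_St at X:
    every simplicial map X -> U_St Y factors uniquely through eta via a
    T-complex morphism S -> Y. *)
Definition is_St (X : sSet) (St : TCom) (eta : forall n, X n -> St n) : Prop :=
  is_smap X St eta /\
  forall (Y : TCom) (f : forall n, X n -> Y n), is_smap X Y f ->
    exists g : forall n, St n -> Y n,
      is_tmap St Y g /\ (forall n x, g n (eta n x) = f n x) /\
      (forall g' : forall n, St n -> Y n, is_tmap St Y g' ->
         (forall n x, g' n (eta n x) = f n x) -> forall n y, g' n y = g n y).

From Stdlib Require Import Lia PeanoNat ProofIrrelevance.

(* The simplices of St(X) all of whose iterated faces of dimension > n are thin
   form a sub-T-complex: this class is closed under faces and degeneracies, and
   under thin horn fillers because the missing face of such a filler is a thin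
   composite.  Since X is n-skeletal and degenerate simplices are thin, this
   sub-T-complex contains the image of X, so by freeness it is all of St(X).
   In a T-complex in which every simplex of dimension > n is thin, thin simplices
   with equal faces coincide (both are the thin filler of one horn), hence every
   map from the boundary of Delta^k with k > n + 1 has exactly one extension:
   the thin filler of any of its horns. *)

Definition thin_above (T : TCom) (n : nat) : Prop :=
  forall q (t : T (S q)), n <= q -> thin T q t.

Lemma compat_mono (X : sSet) (P Q : nat -> Prop) m (h : nat -> X m) :
  (forall i, Q i -> P i) -> compat X P m h -> compat X Q m h.
Proof.
  destruct m as [|p]; [trivial|].
  intros HQP Hc i j Hij Hj Qi Qj. apply Hc; auto.
Qed.

Lemma compat_faces (X : sSet) (P : nat -> Prop) m (y : X (S m)) :
  compat X P m (fun i => face m i y).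
Proof.
  destruct m as [|p]; [exact I|].
  intros i j Hij Hj _ _. now apply dd.
Qed.

Lemma thin_eq_of_faces (T : TCom) m (x y : T (S m)) :
  thin T m x -> thin T m y -> (forall i, i <= S m -> face m i x = face m i y) -> x = y.
Proof.
  intros Hx Hy Hxy.
  destruct (thin_horn T m 0 _ (Nat.le_0_l _) (compat_faces T (horn_idx 0) m y))
    as [z [_ Hz]].
  transitivity z; [symmetry|]; apply Hz; split; auto; intros i Hi _; auto.
Qed.

Lemma coskeletal_of_thin_above (T : TCom) n : thin_above T n -> coskeletal (S n) T.
Proof.
  intros Hthin k h Hk Hc.
  destruct k as [|k]; [lia|].
  destruct (thin_horn T (S k) 0 h (Nat.le_0_l _) (compat_mono _ _ _ _ _ (fun _ _ => I) Hc))
    as [x [[Hx Hfill] Huniq]].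
  assert (Hface0 : face (S k) 0 x = h 0).
  { apply thin_eq_of_faces; try (apply Hthin; lia).
    intros j Hj.
    assert (Hdd := dd T k 0 (S j) x ltac:(lia) ltac:(lia)); simpl in Hdd.
    rewrite <- Hdd, Hfill by (unfold horn_idx; lia).
    exact (Hc 0 (S j) ltac:(lia) ltac:(lia) I I). }
  exists x. split.
  - intros [|i] Hi _; [exact Hface0|].
    apply Hfill; [exact Hi | unfold horn_idx; lia].
  - intros y Hy. apply Huniq. split; [apply Hthin; lia|].
    intros i Hi _. now apply Hy.
Qed.

Lemma is_tmap_id (X : TCom) : is_tmap X X (fun _ x => x).
Proof. split; [split|]; auto. Qed.

Lemma is_tmap_comp {X Y Z : TCom} {f : forall n, X n -> Y n} {g : forall n, Y n -> Z n} :
  is_tmap X Y f -> is_tmap Y Z g -> is_tmap X Z (fun n x => g n (f n x)).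
Proof.
  intros [[Hf1 Hf2] Hf3] [[Hg1 Hg2] Hg3]. split; [split|].
  - intros n i x Hi. now rewrite Hf1, Hg1.
  - intros n i x Hi. now rewrite Hf2, Hg2.
  - auto.
Qed.

Lemma is_St_endo_id (X : sSet) (St : TCom) (eta : forall n, X n -> St n)
    (g : forall n, St n -> St n) :
  is_St X St eta -> is_tmap St St g -> (forall n x, g n (eta n x) = eta n x) ->
  forall n s, g n s = s.
Proof.
  intros [Heta HU] Hg Hgeta n s.
  destruct (HU St eta Heta) as (G & _ & _ & HG).
  rewrite (HG g Hg Hgeta n s). symmetry.
  exact (HG (fun _ s => s) (is_tmap_id St) (fun _ _ => eq_refl) n s).
Qed.

Section SubTCom.

Variable T : TCom.
Variable P : forall m, T m -> Prop.
Hypothesis P_face : forall m i (s : T (S m)), i <= S m -> P (S m) s -> P m (face m i s).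
Hypothesis P_degen : forall m j (s : T m), j <= m -> P m s -> P (S m) (degen m j s).
Hypothesis P_thin_filler : forall m k (h : nat -> T m) (x : T (S m)),
  k <= S m -> compat T (horn_idx k) m h -> thin T m x -> fills T (horn_idx k) m h x ->
  (forall i, i <= S m -> i <> k -> P m (h i)) -> P (S m) x.

Definition sub_ob m : Type := {s : T m | P m s}.

(* Out-of-range indices are clamped so that [sub_face] and [sub_degen] are total. *)
Definition sub_face m i (y : sub_ob (S m)) : sub_ob m :=
  exist _ (face m (Nat.min i (S m)) (proj1_sig y))
    (P_face _ _ _ (Nat.le_min_r _ _) (proj2_sig y)).

Definition sub_degen m j (y : sub_ob m) : sub_ob (S m) :=
  exist _ (degen m (Nat.min j m) (proj1_sig y))
    (P_degen _ _ _ (Nat.le_min_r _ _) (proj2_sig y)).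

Lemma sub_eq m (a b : sub_ob m) : proj1_sig a = proj1_sig b -> a = b.
Proof. apply eq_sig_hprop. intros; apply proof_irrelevance. Qed.

Lemma sub_dd n i j (x : sub_ob (S (S n))) : i < j -> j <= S (S n) ->
  sub_face n i (sub_face (S n) j x) = sub_face n (pred j) (sub_face (S n) i x).
Proof. intros; apply sub_eq; cbn; rewrite !Nat.min_l by lia; apply dd; lia. Qed.

Lemma sub_ds_lt n i j (x : sub_ob (S n)) : i < j -> j <= S n ->
  sub_face (S n) i (sub_degen (S n) j x) = sub_degen n (pred j) (sub_face n i x).
Proof. intros; apply sub_eq; cbn; rewrite !Nat.min_l by lia; apply ds_lt; lia. Qed.

Lemma sub_ds_eq n j (x : sub_ob n) : j <= n -> sub_face n j (sub_degen n j x) = x.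
Proof. intros; apply sub_eq; cbn; rewrite !Nat.min_l by lia; apply ds_eq; lia. Qed.

Lemma sub_ds_eq1 n j (x : sub_ob n) : j <= n -> sub_face n (S j) (sub_degen n j x) = x.
Proof. intros; apply sub_eq; cbn; rewrite !Nat.min_l by lia; apply ds_eq1; lia. Qed.

Lemma sub_ds_gt n i j (x : sub_ob (S n)) : S j < i -> i <= S (S n) ->
  sub_face (S n) i (sub_degen (S n) j x) = sub_degen n j (sub_face n (pred i) x).
Proof. intros; apply sub_eq; cbn; rewrite !Nat.min_l by lia; apply ds_gt; lia. Qed.

Lemma sub_ss n i j (x : sub_ob n) : i <= j -> j <= n ->
  sub_degen (S n) i (sub_degen n j x) = sub_degen (S n) (S j) (sub_degen n i x).
Proof. intros; apply sub_eq; cbn; rewrite !Nat.min_l by lia; apply ss; lia. Qed.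

Definition sub_sSet : sSet :=
  {| sob := sub_ob; face := sub_face; degen := sub_degen;
     dd := sub_dd; ds_lt := sub_ds_lt; ds_eq := sub_ds_eq;
     ds_eq1 := sub_ds_eq1; ds_gt := sub_ds_gt; ss := sub_ss |}.

Lemma sub_face_val m i (y : sub_sSet (S m)) :
  i <= S m -> proj1_sig (face m i y) = face m i (proj1_sig y).
Proof. intros Hi; cbn; now rewrite Nat.min_l. Qed.

Lemma sub_degen_val m j (y : sub_sSet m) :
  j <= m -> proj1_sig (degen m j y) = degen m j (proj1_sig y).
Proof. intros Hj; cbn; now rewrite Nat.min_l. Qed.

Lemma compat_sub Q m (h : nat -> sub_sSet m) :
  compat sub_sSet Q m h -> compat T Q m (fun i => proj1_sig (h i)).
Proof.
  destruct m as [|p]; [trivial|].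
  intros Hc i j Hij Hj Qi Qj.
  rewrite <- !sub_face_val by lia. now rewrite (Hc i j).
Qed.

Lemma fills_sub Q m (h : nat -> sub_sSet m) (y : sub_sSet (S m)) :
  fills sub_sSet Q m h y <-> fills T Q m (fun i => proj1_sig (h i)) (proj1_sig y).
Proof.
  split; intros Hfill i Hi Qi.
  - rewrite <- sub_face_val by exact Hi. now rewrite Hfill.
  - apply sub_eq. rewrite sub_face_val by exact Hi. now apply Hfill.
Qed.

Lemma degenerate_sub m (y : sub_sSet (S m)) :
  degenerate sub_sSet m y -> degenerate T m (proj1_sig y).
Proof.
  intros (j & z & Hj & ->). exists j, (proj1_sig z).
  split; [exact Hj|]. now apply sub_degen_val.
Qed.

Definition sub_thin m (y : sub_sSet (S m)) : Prop := thin T m (proj1_sig y).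

Lemma sub_thin_degen m (y : sub_sSet (S m)) : degenerate sub_sSet m y -> sub_thin m y.
Proof. intros Hy. apply thin_degen, degenerate_sub, Hy. Qed.

Lemma sub_thin_horn m k (h : nat -> sub_sSet m) :
  k <= S m -> compat sub_sSet (horn_idx k) m h ->
  exists! x : sub_sSet (S m), sub_thin m x /\ fills sub_sSet (horn_idx k) m h x.
Proof.
  intros Hk Hc. apply compat_sub in Hc.
  destruct (thin_horn T m k _ Hk Hc) as [x [[Hx Hfill] Huniq]].
  exists (exist _ x (P_thin_filler m k _ x Hk Hc Hx Hfill (fun i _ _ => proj2_sig (h i)))).
  split.
  - split; [exact Hx|]. now apply fills_sub.
  - intros y [Hy Hfill_y]. apply sub_eq, Huniq.
    split; [exact Hy|]. now apply fills_sub.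
Qed.

Lemma sub_thin_comp m k (h : nat -> sub_sSet (S m)) (x : sub_sSet (S (S m))) :
  k <= S (S m) -> compat sub_sSet (horn_idx k) (S m) h ->
  sub_thin (S m) x -> fills sub_sSet (horn_idx k) (S m) h x ->
  (forall i, i <= S (S m) -> i <> k -> ~ degenerate sub_sSet m (h i) -> sub_thin m (h i)) ->
  sub_thin m (face (S m) k x).
Proof.
  intros Hk Hc Hx Hfill Hnd. unfold sub_thin. rewrite sub_face_val by exact Hk.
  apply (thin_comp T m k _ _ Hk (compat_sub _ _ _ Hc) Hx (proj1 (fills_sub _ _ _ _) Hfill)).
  intros i Hi Hik Hndi. apply Hnd; [exact Hi | exact Hik |].
  intros Hd. now apply Hndi, degenerate_sub.
Qed.

Definition sub_TCom : TCom :=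
  {| tss := sub_sSet; thin := sub_thin; thin_degen := sub_thin_degen;
     thin_horn := sub_thin_horn; thin_comp := sub_thin_comp |}.

Lemma is_tmap_val : is_tmap sub_TCom T (fun _ y => proj1_sig y).
Proof.
  split; [split|].
  - exact sub_face_val.
  - exact sub_degen_val.
  - exact (fun _ _ Hy => Hy).
Qed.

Lemma is_St_sub_full (X : sSet) (eta : forall m, X m -> T m) :
  is_St X T eta -> (forall m x, P m (eta m x)) -> forall m s, P m s.
Proof.
  intros HSt HPeta.
  pose (eta_sub := fun m x => exist (P m) (eta m x) (HPeta m x) : sub_TCom m).
  assert (Heta_sub : is_smap X sub_TCom eta_sub).
  { destruct HSt as [[Hface Hdegen] _].
    split; intros m i x Hi; apply sub_eq; cbn; rewrite Nat.min_l by exact Hi; auto. }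
  destruct (proj2 HSt sub_TCom eta_sub Heta_sub) as (g & Hg & Hgeta & _).
  assert (Hval : forall m s, proj1_sig (g m s) = s).
  { apply (is_St_endo_id X T eta (fun m s => proj1_sig (g m s)) HSt).
    - exact (is_tmap_comp Hg is_tmap_val).
    - intros m x. cbn beta. now rewrite Hgeta. }
  intros m s. rewrite <- (Hval m s). exact (proj2_sig (g m s)).
Qed.

End SubTCom.

Fixpoint faces_thin_above (T : TCom) (n m : nat) : T m -> Prop :=
  match m return T m -> Prop with
  | 0 => fun _ => True
  | S m' => fun s => (n <= m' -> thin T m' s) /\
                     forall i, i <= S m' -> faces_thin_above T n m' (face m' i s)
  end.

Lemma faces_thin_above_face (T : TCom) n m i (s : T (S m)) :
  i <= S m -> faces_thin_above T n (S m) s -> faces_thin_above T n m (face m i s).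
Proof. intros Hi [_ Hs]. now apply Hs. Qed.

Lemma faces_thin_above_degen (T : TCom) n m j (s : T m) :
  j <= m -> faces_thin_above T n m s -> faces_thin_above T n (S m) (degen m j s).
Proof.
  revert j s; induction m as [|m IH]; intros j s Hj Hs.
  all: split; [intros _; apply thin_degen; exists j, s; auto|].
  - intros; exact I.
  - intros i Hi.
    destruct (Nat.lt_ge_cases i j) as [Hij|Hji].
    + rewrite ds_lt by lia. apply IH; [lia | apply faces_thin_above_face; [lia | exact Hs]].
    + destruct (Nat.eq_dec i j) as [->|Hneq]; [now rewrite ds_eq|].
      destruct (Nat.eq_dec i (S j)) as [->|HneqS]; [now rewrite ds_eq1|].
      rewrite ds_gt by lia. apply IH; [lia | apply faces_thin_above_face; [lia | exact Hs]].
Qed.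

Lemma faces_thin_above_composite (T : TCom) n m k (h : nat -> T m) (x : T (S m)) :
  k <= S m -> compat T (horn_idx k) m h -> thin T m x -> fills T (horn_idx k) m h x ->
  (forall i, i <= S m -> i <> k -> faces_thin_above T n m (h i)) ->
  faces_thin_above T n m (face m k x).
Proof.
  intros Hk Hc Hx Hfill Hh.
  destruct m as [|m]; [exact I|]. split.
  - intros Hn. apply (thin_comp T m k h x Hk Hc Hx Hfill).
    intros i Hi Hik _. exact (proj1 (Hh i Hi Hik) Hn).
  - intros i Hi. destruct (Nat.lt_ge_cases i k) as [Hik|Hki].
    + rewrite (dd T m i k x Hik Hk), Hfill by (unfold horn_idx; lia).
      apply faces_thin_above_face; [lia | apply Hh; lia].
    + assert (Hdd := dd T m k (S i) x ltac:(lia) ltac:(lia)); simpl in Hdd.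
      rewrite <- Hdd, Hfill by (unfold horn_idx; lia).
      apply faces_thin_above_face; [lia | apply Hh; lia].
Qed.

Lemma faces_thin_above_horn_filler (T : TCom) n m k (h : nat -> T m) (x : T (S m)) :
  k <= S m -> compat T (horn_idx k) m h -> thin T m x -> fills T (horn_idx k) m h x ->
  (forall i, i <= S m -> i <> k -> faces_thin_above T n m (h i)) ->
  faces_thin_above T n (S m) x.
Proof.
  intros Hk Hc Hx Hfill Hh. split; [intros _; exact Hx|].
  intros i Hi. destruct (Nat.eq_dec i k) as [->|Hik].
  - exact (faces_thin_above_composite T n m k h x Hk Hc Hx Hfill Hh).
  - rewrite Hfill by assumption. now apply Hh.
Qed.

Lemma faces_thin_above_eta n (X : sSet) (T : TCom) (eta : forall m, X m -> T m) :
  skeletal n X -> is_smap X T eta -> forall m x, faces_thin_above T n m (eta m x).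
Proof.
  intros Hskel [Hface Hdegen]. induction m as [|m IH]; intros x; [exact I|]. split.
  - intros Hn. destruct (Hskel m x ltac:(lia)) as (i & y & Hi & ->).
    rewrite Hdegen by exact Hi. apply thin_degen. exists i, (eta m y); auto.
  - intros i Hi. rewrite <- Hface by exact Hi. apply IH.
Qed.

Theorem mainTheorem11 : forall (n : nat) (X : sSet),
  skeletal n X ->
  forall (St : TCom) (eta : forall k, X k -> St k),
    is_St X St eta ->
    coskeletal (S n) (tss St).
Proof.
  intros n X Hskel St eta HSt.
  assert (Hall : forall m s, faces_thin_above St n m s).
  { apply (is_St_sub_full St (faces_thin_above St n) (faces_thin_above_face St n)
             (faces_thin_above_degen St n) (faces_thin_above_horn_filler St n) X eta HSt).
    exact (faces_thin_above_eta n X St eta Hskel (proj1 HSt)). }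
  apply (coskeletal_of_thin_above St n).
  intros q t Hq. exact (proj1 (Hall (S q) t) Hq).
Qed.
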